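(* In the setup described in the context, let $x\in T_pM$ induce a $Q$-basis. Let $\psi=\angle(x,Q^2x)$ be the $g$-angle, and assume $\psi\neq\pi/2$. Then $$\tilde r(x)=\frac{1}{\cos\psi}\,r(x)+\frac{1}{8\cos\psi}(3\tilde\tau^*+\tilde\tau-3\tau-\tau^* )+\frac18(3\tilde\tau+\tilde\tau^*-3\tau^*-\tau).$$
   Context: Let $M$ be a 3-dimensional smooth manifold. Fix a coordinate chart $(x^1,x^2,x^3)$ with coordinate vector fields $\partial_i$. Structures: - $g$ is a Riemannian metric with $g(\partial_1,\partial_1)=g(\partial_2,\partial_2)=A$, $g(\partial_3,\partial_3)=B$ and $g(\partial_i,\partial_j)=0$ for $i\ne j$. Here $A,B$ are smooth positive functions. - $Q$ is the $(1,1)$-tensor field with $Q\partial_1=\partial_2$, $Q\partial_2=-\partial_1$, $Q\partial_3=\partial_3$. - $P=Q^2$ and $\tilde g(x,y)=g(x,Py)$. Connections and curvature: - $\nabla$ and $\tilde\nabla$ are the Levi-Civita connections of $g$ and $\tilde g$. - $R(x,y)z=\nabla_x\nabla_yz-\nabla_y\nabla_xz-\nabla_{[x,y]}z$ and $R(x,y,z,t)=g(R(x,y)z,t)$. Analogously $\tilde R(x,y,z,t)=\tilde g(\tilde R(x,y)z,t)$. Ricci tensors and scalar quantities: - $\rho(y,z)=g^{ij}R(e_i,y,z,e_j)$ and $\tilde\rho(y,z)=\tilde g^{ij}\tilde R(e_i,y,z,e_j)$. - $\tau=g^{ij}\rho_{ij}$, $\tau^*=\tilde g^{ij}\rho_{ij}$,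 $\tilde\tau=\tilde g^{ij}\tilde\rho_{ij}$, $\tilde\tau^*=g^{ij}\tilde\rho_{ij}$. Ricci curvatures in a direction: - $r(x)=\rho(x,x)/g(x,x)$ and $\tilde r(x)=\tilde\rho(x,x)/\tilde g(x,x)$. Angles and $Q$-bases: - The $g$-angle is defined by $\cos\angle(u,v)=g(u,v)/\sqrt{g(u,u)g(v,v)}$. - A vector $x$ induces a $Q$-basis if $\{x,Qx,Q^2x\}$ is a basis of $T_pM$. *)

From Stdlib Require Import Reals Lra.
From Coquelicot Require Import Coquelicot.
Open Scope R_scope.

(* Points of the coordinate chart (x^1,x^2,x^3), and tangent-vector
   components in the coordinate basis (d_1,d_2,d_3), are triples of reals.
   Indices are 0,1,2 (standing for 1,2,3). *)
Definition pt := (R * R * R)%type.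

Definition coord (p : pt) (i : nat) : R :=
  match p with (a, b, c) =>
    match i with O => a | 1%nat => b | _ => c end end.

Definition upd (p : pt) (i : nat) (t : R) : pt :=
  match p with (a, b, c) =>
    match i with O => (t, b, c) | 1%nat => (a, t, c) | _ => (a, b, t) end end.

Definition mkpt (f : nat -> R) : pt := (f 0%nat, f 1%nat, f 2%nat).

Definition sum3 (f : nat -> R) : R := f 0%nat + f 1%nat + f 2%nat.

Definition pd (i : nat) (f : pt -> R) (p : pt) : R :=
  Derive (fun t => f (upd p i t)) (coord p i).

Definition iter_pd (l : list nat) (f : pt -> R) : pt -> R :=
  List.fold_right pd f l.

Definition smooth_on (U : pt -> Prop) (f : pt -> R) : Prop :=
  forall (l : list nat), List.Forall (fun i => (i < 3)%nat) l ->
    forall p, U p ->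
      continuous (iter_pd l f) p /\
      forall i, (i < 3)%nat -> ex_derive (fun t => iter_pd l f (upd p i t)) (coord p i).

Definition det3 (M : nat -> nat -> R) : R :=
  M 0%nat 0%nat * (M 1%nat 1%nat * M 2%nat 2%nat - M 1%nat 2%nat * M 2%nat 1%nat)
  - M 0%nat 1%nat * (M 1%nat 0%nat * M 2%nat 2%nat - M 1%nat 2%nat * M 2%nat 0%nat)
  + M 0%nat 2%nat * (M 1%nat 0%nat * M 2%nat 1%nat - M 1%nat 1%nat * M 2%nat 0%nat).

(* inverse matrix via the adjugate: (M^-1)_{ij} = cofactor_{ji} / det,
   written with cyclic indices mod 3 *)
Definition inv3 (M : nat -> nat -> R) (i j : nat) : R :=
  let s k := ((k + 1) mod 3)%nat in
  let t k := ((k + 2) mod 3)%nat in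
  (M (s j) (s i) * M (t j) (t i) - M (s j) (t i) * M (t j) (s i)) / det3 M.

Definition gmet (A B : pt -> R) (i j : nat) (p : pt) : R :=
  if Nat.eqb i j then (if Nat.eqb i 2 then B p else A p) else 0.

(* Q as a matrix: Q d_j = sum_k Qm k j d_k *)
Definition Qm (k j : nat) : R :=
  match k, j with
  | 1%nat, 0%nat => 1
  | 0%nat, 1%nat => -1
  | 2%nat, 2%nat => 1
  | _, _ => 0
  end.

Definition Pm (k j : nat) : R := sum3 (fun m => Qm k m * Qm m j).

Definition Qv (x : pt) : pt := mkpt (fun k => sum3 (fun j => Qm k j * coord x j)).

(* tilde g (d_i, d_j) = g(d_i, P d_j) *)
Definition gtmet (A B : pt -> R) (i j : nat) (p : pt) : R :=
  sum3 (fun k => Pm k j * gmet A B i k p).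

Definition inv_met (G : nat -> nat -> pt -> R) (i j : nat) (p : pt) : R :=
  inv3 (fun a b => G a b p) i j.

(* Christoffel symbols: nabla_{d_i} d_j = sum_k Gam k i j d_k *)
Definition Gam (G : nat -> nat -> pt -> R) (k i j : nat) (p : pt) : R :=
  / 2 * sum3 (fun l => inv_met G k l p *
     (pd i (G j l) p + pd j (G i l) p - pd l (G i j) p)).

(* R(d_i, d_j) d_k = sum_l Riem l i j k d_l, with
   R(x,y)z = nabla_x nabla_y z - nabla_y nabla_x z - nabla_[x,y] z *)
Definition Riem (G : nat -> nat -> pt -> R) (l i j k : nat) (p : pt) : R :=
  pd i (Gam G l j k) p - pd j (Gam G l i k) p
  + sum3 (fun m => Gam G m j k p * Gam G l i m p - Gam G m i k p * Gam G l j m p).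

(* R(d_a,d_b,d_c,d_d) = G(R(d_a,d_b)d_c, d_d) *)
Definition R4 (G : nat -> nat -> pt -> R) (a b c d : nat) (p : pt) : R :=
  sum3 (fun l => Riem G l a b c p * G l d p).

(* Ricci tensor rho(y,z) = G^{ij} R(e_i, y, z, e_j) *)
Definition Ric (G : nat -> nat -> pt -> R) (b c : nat) (p : pt) : R :=
  sum3 (fun a => sum3 (fun d => inv_met G a d p * R4 G a b c d p)).

Definition bil (F : nat -> nat -> R) (x y : pt) : R :=
  sum3 (fun i => sum3 (fun j => F i j * coord x i * coord y j)).

Definition trace_wrt (H : nat -> nat -> pt -> R) (T : nat -> nat -> pt -> R) (p : pt) : R :=
  sum3 (fun i => sum3 (fun j => inv_met H i j p * T i j p)).

Definition rho A B := Ric (gmet A B).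
Definition rhot A B := Ric (gtmet A B).
Definition tau A B p := trace_wrt (gmet A B) (rho A B) p.
Definition tau_star A B p := trace_wrt (gtmet A B) (rho A B) p.
Definition taut A B p := trace_wrt (gtmet A B) (rhot A B) p.
Definition taut_star A B p := trace_wrt (gmet A B) (rhot A B) p.

Definition ric_dir A B p (x : pt) : R :=
  bil (fun i j => rho A B i j p) x x / bil (fun i j => gmet A B i j p) x x.
Definition ric_dir_t A B p (x : pt) : R :=
  bil (fun i j => rhot A B i j p) x x / bil (fun i j => gtmet A B i j p) x x.

Definition g_angle A B p (u v : pt) : R :=
  acos (bil (fun i j => gmet A B i j p) u v /
        sqrt (bil (fun i j => gmet A B i j p) u u * bil (fun i j => gmet A B i j p) v v)).

Definition vzero : pt := (0, 0, 0).
Definition vadd (u v : pt) : pt := mkpt (fun i => coord u i + coord v i).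
Definition vscal (a : R) (u : pt) : pt := mkpt (fun i => a * coord u i).

Definition is_basis3 (u v w : pt) : Prop :=
  (forall a b c, vadd (vadd (vscal a u) (vscal b v)) (vscal c w) = vzero ->
     a = 0 /\ b = 0 /\ c = 0) /\
  (forall y : pt, exists a b c, vadd (vadd (vscal a u) (vscal b v)) (vscal c w) = y).

Definition induces_Q_basis (x : pt) : Prop := is_basis3 x (Qv x) (Qv (Qv x)).

(** Since [P = Q^2 = diag(-1,-1,1)], the metric [g~ = diag(-A,-A,B)] differs from
    [g = diag(A,A,B)] only by the sign of the block [{d_1,d_2}].  Hence every
    Christoffel symbol of [g~] is [±] the corresponding one of [g], the sign being [-1]
    exactly for [Gam^k_ii] with [k] and [i] in different blocks, and expanding both
    Ricci tensors gives [rho~ - rho = diag(d,d,e)].  On the other hand [Q^2] is a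
    [g]-isometry with [g(x,Q^2 x) = g~(x,x)], so [cos psi = g~(x,x) / g(x,x)].  With
    these two facts the formula is a rational identity in [d], [e], [A], [B] and the
    components of [x]. *)

From Stdlib Require Import Reals Lra Lia.
From Coquelicot Require Import Coquelicot.
Open Scope R_scope.

Lemma pd_scal i c (f : pt -> R) p : pd i (fun q => c * f q) p = c * pd i f p.
Proof. unfold pd. apply Derive_scal. Qed.

Lemma pd_ext_loc (U : pt -> Prop) (f h : pt -> R) i p :
  open U -> U p -> (forall q, U q -> f q = h q) -> pd i f p = pd i h p.
Proof.
  intros hU hp hfh. unfold pd. apply Derive_ext_loc.
  destruct (hU p hp) as [eps Heps]. exists eps. intros t ht.
  apply hfh, Heps. destruct p as [[p0 p1] p2].
  destruct i as [|[|i]]; simpl in *; repeat split; try apply ball_center; exact ht.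
Qed.

Definition diag_at (G : nat -> nat -> pt -> R) (q : pt) : Prop :=
  G 0%nat 1%nat q = 0 /\ G 0%nat 2%nat q = 0 /\ G 1%nat 0%nat q = 0 /\
  G 1%nat 2%nat q = 0 /\ G 2%nat 0%nat q = 0 /\ G 2%nat 1%nat q = 0 /\
  G 0%nat 0%nat q <> 0 /\ G 1%nat 1%nat q <> 0 /\ G 2%nat 2%nat q <> 0.

Section DiagonalMetric.
Variables (G : nat -> nat -> pt -> R) (q : pt).
Hypothesis diagG : diag_at G q.

Lemma inv_met_diag k l : (k < 3)%nat -> (l < 3)%nat ->
  inv_met G k l q = if Nat.eqb k l then / G k k q else 0.
Proof.
  destruct diagG as (h01 & h02 & h10 & h12 & h20 & h21 & n0 & n1 & n2).
  intros hk hl.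
  destruct k as [|[|[|k]]]; try lia; destruct l as [|[|[|l]]]; try lia;
    unfold inv_met, inv3, det3; simpl; rewrite h01, h02, h10, h12, h20, h21;
    field; auto.
Qed.

Lemma Gam_diag k i j : (k < 3)%nat ->
  Gam G k i j q = / 2 * / G k k q * (pd i (G j k) q + pd j (G i k) q - pd k (G i j) q).
Proof.
  intros hk. unfold Gam, sum3.
  rewrite !inv_met_diag by lia.
  destruct k as [|[|[|k]]]; try lia; simpl; ring.
Qed.

Lemma Ric_diag b c : Ric G b c q = sum3 (fun a => Riem G a a b c q).
Proof.
  destruct diagG as (h01 & h02 & h10 & h12 & h20 & h21 & n0 & n1 & n2).
  unfold Ric, R4, sum3. rewrite !inv_met_diag by lia. simpl.
  rewrite h01, h02, h10, h12, h20, h21. field. auto.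
Qed.

Lemma trace_wrt_diag T :
  trace_wrt G T q = T 0%nat 0%nat q / G 0%nat 0%nat q + T 1%nat 1%nat q / G 1%nat 1%nat q
                    + T 2%nat 2%nat q / G 2%nat 2%nat q.
Proof. unfold trace_wrt, sum3. rewrite !inv_met_diag by lia. simpl. unfold Rdiv. ring. Qed.

End DiagonalMetric.

Section TwistedMetric.
Variables (A B : pt -> R).

Lemma gtmet_eq i j q : (j < 3)%nat -> gtmet A B i j q = Pm j j * gmet A B i j q.
Proof.
  intros hj. destruct j as [|[|[|j]]]; try lia;
    unfold gtmet, Pm, Qm, sum3; simpl; ring.
Qed.

Lemma pd_gmet m i j q : pd m (gmet A B i j) q =
  if Nat.eqb i j then (if Nat.eqb i 2 then pd m B q else pd m A q) else 0.
Proof.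
  unfold pd, gmet. destruct (Nat.eqb i j); [destruct (Nat.eqb i 2)|]; auto.
  apply Derive_const.
Qed.

Lemma pd_gtmet m i j q : (j < 3)%nat ->
  pd m (gtmet A B i j) q = Pm j j * pd m (gmet A B i j) q.
Proof.
  intros hj. rewrite <- pd_scal. unfold pd. apply Derive_ext. intros t. apply gtmet_eq; auto.
Qed.

Lemma diag_at_gmet q : A q <> 0 -> B q <> 0 -> diag_at (gmet A B) q.
Proof. intros; unfold diag_at, gmet; simpl; repeat split; auto. Qed.

Lemma diag_at_gtmet q : A q <> 0 -> B q <> 0 -> diag_at (gtmet A B) q.
Proof.
  intros; unfold diag_at, gtmet, Pm, Qm, sum3, gmet; simpl; repeat split; try ring; lra.
Qed.

Lemma trace_wrt_gmet q T : A q <> 0 -> B q <> 0 ->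
  trace_wrt (gmet A B) T q = (T 0%nat 0%nat q + T 1%nat 1%nat q) / A q + T 2%nat 2%nat q / B q.
Proof.
  intros hA hB. rewrite (trace_wrt_diag _ _ (diag_at_gmet q hA hB)).
  unfold gmet. simpl. field; auto.
Qed.

Lemma trace_wrt_gtmet q T : A q <> 0 -> B q <> 0 ->
  trace_wrt (gtmet A B) T q = - (T 0%nat 0%nat q + T 1%nat 1%nat q) / A q + T 2%nat 2%nat q / B q.
Proof.
  intros hA hB. rewrite (trace_wrt_diag _ _ (diag_at_gtmet q hA hB)), !gtmet_eq by lia.
  unfold Pm, Qm, sum3, gmet. simpl. field; auto.
Qed.

Lemma bil_gmet q x : bil (fun i j => gmet A B i j q) x x =
  A q * (coord x 0 * coord x 0 + coord x 1 * coord x 1) + B q * (coord x 2 * coord x 2).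
Proof. unfold bil, sum3, gmet. simpl. ring. Qed.

Lemma bil_gtmet q x : bil (fun i j => gtmet A B i j q) x x =
  - A q * (coord x 0 * coord x 0 + coord x 1 * coord x 1) + B q * (coord x 2 * coord x 2).
Proof. unfold bil, sum3, gtmet, Pm, Qm, sum3, gmet. simpl. ring. Qed.

Lemma bil_gmet_Qv2_r q x :
  bil (fun i j => gmet A B i j q) x (Qv (Qv x)) = bil (fun i j => gtmet A B i j q) x x.
Proof. unfold bil, sum3, Qv, mkpt, gtmet, Pm, Qm, gmet, sum3. simpl. ring. Qed.

Lemma bil_gmet_Qv2 q x :
  bil (fun i j => gmet A B i j q) (Qv (Qv x)) (Qv (Qv x)) = bil (fun i j => gmet A B i j q) x x.
Proof. destruct x as [[x0 x1] x2]. unfold bil, sum3, Qv, mkpt, Qm, gmet, sum3. simpl. ring. Qed.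

Definition Gam_sign (k i j : nat) : R :=
  if andb (Nat.eqb i j) (xorb (Nat.eqb k 2) (Nat.eqb i 2)) then -1 else 1.

Lemma Gam_gtmet q k i j : A q <> 0 -> B q <> 0 ->
  (k < 3)%nat -> (i < 3)%nat -> (j < 3)%nat ->
  Gam (gtmet A B) k i j q = Gam_sign k i j * Gam (gmet A B) k i j q.
Proof.
  intros hA hB hk hi hj.
  rewrite (Gam_diag _ _ (diag_at_gtmet q hA hB)), (Gam_diag _ _ (diag_at_gmet q hA hB)) by lia.
  rewrite !pd_gtmet, gtmet_eq, !pd_gmet by lia.
  destruct k as [|[|[|k]]]; try lia; destruct i as [|[|[|i]]]; try lia;
    destruct j as [|[|[|j]]]; try lia; unfold Gam_sign, Pm, Qm, sum3, gmet; simpl;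
    field; lra.
Qed.

Lemma Gam_gmet_200_211 q : A q <> 0 -> B q <> 0 ->
  Gam (gmet A B) 2 0 0 q = Gam (gmet A B) 2 1 1 q.
Proof.
  intros hA hB. rewrite !(Gam_diag _ _ (diag_at_gmet q hA hB)) by lia.
  rewrite !pd_gmet. simpl. ring.
Qed.

End TwistedMetric.

Section TwistedRicci.
Variables (U : pt -> Prop) (A B : pt -> R).
Hypotheses (HU : open U) (HA : forall q, U q -> A q <> 0) (HB : forall q, U q -> B q <> 0).

Lemma pd_Gam_gtmet m k i j p : U p -> (k < 3)%nat -> (i < 3)%nat -> (j < 3)%nat ->
  pd m (Gam (gtmet A B) k i j) p = Gam_sign k i j * pd m (Gam (gmet A B) k i j) p.
Proof.
  intros hp hk hi hj. rewrite <- pd_scal. apply (pd_ext_loc U); auto.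
  intros q hq. apply Gam_gtmet; auto.
Qed.

Lemma pd_Gam_gmet_200_211 p : U p ->
  pd 2 (Gam (gmet A B) 2 0 0) p = pd 2 (Gam (gmet A B) 2 1 1) p.
Proof. intros hp. apply (pd_ext_loc U); auto. intros q hq. apply Gam_gmet_200_211; auto. Qed.

Lemma rhot_sub_rho p : U p -> exists d e : R, forall i j, (i < 3)%nat -> (j < 3)%nat ->
  rhot A B i j p = rho A B i j p + gmet (fun _ => d) (fun _ => e) i j p.
Proof.
  intros hp. pose proof (HA p hp) as hAp. pose proof (HB p hp) as hBp.
  exists (rhot A B 0 0 p - rho A B 0 0 p), (rhot A B 2 2 p - rho A B 2 2 p).
  intros i j hi hj. unfold gmet.
  (* Apart from the entries (0,0) and (2,2) defining [d] and [e], each entry becomes a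
     rational identity once both sides are written through the Christoffel symbols of [g]. *)
  destruct i as [|[|[|i]]]; try lia; destruct j as [|[|[|j]]]; try lia; simpl; try ring;
    unfold rhot, rho;
    rewrite !(Ric_diag _ _ (diag_at_gtmet A B p hAp hBp)),
      !(Ric_diag _ _ (diag_at_gmet A B p hAp hBp));
    unfold sum3, Riem, sum3;
    rewrite !pd_Gam_gtmet, ?pd_Gam_gmet_200_211, !Gam_gtmet,
      !(Gam_diag _ _ (diag_at_gmet A B p hAp hBp)) by (auto; lia);
    rewrite !pd_gmet; unfold Gam_sign, gmet; simpl; field; auto.
Qed.

End TwistedRicci.

Lemma Q_basis_nonzero x : induces_Q_basis x -> x <> vzero.
Proof.
  intros [Hindep _] ->. destruct (Hindep 1 0 0) as [H10 _]; [|lra].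
  unfold vadd, vscal, mkpt, Qv, vzero. simpl. f_equal; [f_equal|]; ring.
Qed.

Lemma bil_gmet_pos A B p x : 0 < A p -> 0 < B p -> x <> vzero ->
  0 < bil (fun i j => gmet A B i j p) x x.
Proof.
  intros hA hB hx. rewrite bil_gmet.
  destruct x as [[x0 x1] x2]. simpl.
  destruct (Req_dec x0 0) as [->|h0]; [destruct (Req_dec x1 0) as [->|h1];
    [destruct (Req_dec x2 0) as [->|h2]; [now contradiction hx|]|]|].
  - assert (0 < x2 * x2) by (apply Rsqr_pos_lt; auto). nra.
  - assert (0 < x1 * x1) by (apply Rsqr_pos_lt; auto). nra.
  - assert (0 < x0 * x0) by (apply Rsqr_pos_lt; auto). nra.
Qed.

Lemma g_angle_Qv2 A B p x : 0 < bil (fun i j => gmet A B i j p) x x ->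
  g_angle A B p x (Qv (Qv x)) =
  acos (bil (fun i j => gtmet A B i j p) x x / bil (fun i j => gmet A B i j p) x x).
Proof.
  intros hw. unfold g_angle. rewrite bil_gmet_Qv2_r, bil_gmet_Qv2, sqrt_square by lra.
  reflexivity.
Qed.

Lemma cos_g_angle_Qv2 A B p x : 0 < A p -> 0 < B p -> x <> vzero ->
  cos (g_angle A B p x (Qv (Qv x))) =
  bil (fun i j => gtmet A B i j p) x x / bil (fun i j => gmet A B i j p) x x.
Proof.
  intros hA hB hx. pose proof (bil_gmet_pos A B p x hA hB hx) as hw.
  rewrite g_angle_Qv2 by lra. apply cos_acos.
  rewrite bil_gmet, bil_gtmet in *.
  set (a := coord x 0 * coord x 0 + coord x 1 * coord x 1) in *.
  set (b := coord x 2 * coord x 2) in *.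
  assert (0 <= a) by (unfold a; nra). assert (0 <= b) by (unfold b; nra).
  split; apply (Rmult_le_reg_r (A p * a + B p * b)); auto;
    unfold Rdiv; rewrite Rmult_assoc, Rinv_l by lra; nra.
Qed.

Lemma ric_dir_t_formula A B p d e x : A p <> 0 -> B p <> 0 ->
  (forall i j, (i < 3)%nat -> (j < 3)%nat ->
     rhot A B i j p = rho A B i j p + gmet (fun _ => d) (fun _ => e) i j p) ->
  bil (fun i j => gmet A B i j p) x x <> 0 -> bil (fun i j => gtmet A B i j p) x x <> 0 ->
  let c := bil (fun i j => gtmet A B i j p) x x / bil (fun i j => gmet A B i j p) x x in
  ric_dir_t A B p x =
    / c * ric_dir A B p x
    + / (8 * c) * (3 * taut_star A B p + taut A B p - 3 * tau A B p - tau_star A B p)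
    + / 8 * (3 * taut A B p + taut_star A B p - 3 * tau_star A B p - tau A B p).
Proof.
  intros hA hB hdiff hw hv c. unfold c, ric_dir_t, ric_dir, taut, taut_star, tau, tau_star.
  rewrite !trace_wrt_gmet, !trace_wrt_gtmet, !hdiff by (auto; lia).
  rewrite bil_gmet, bil_gtmet in *.
  unfold bil, sum3. rewrite !hdiff by lia. unfold gmet. simpl.
  field. repeat split; auto.
Qed.

Theorem theorem5p5 (U : pt -> Prop) (A B : pt -> R)
  (HU : open U) (HA : smooth_on U A) (HB : smooth_on U B)
  (HApos : forall q, U q -> 0 < A q) (HBpos : forall q, U q -> 0 < B q)
  (p : pt) (Hp : U p) (x : pt)
  (Hx : induces_Q_basis x)
  (Hpsi : g_angle A B p x (Qv (Qv x)) <> PI / 2) :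
  let psi := g_angle A B p x (Qv (Qv x)) in
  ric_dir_t A B p x =
    / cos psi * ric_dir A B p x
    + / (8 * cos psi) * (3 * taut_star A B p + taut A B p - 3 * tau A B p - tau_star A B p)
    + / 8 * (3 * taut A B p + taut_star A B p - 3 * tau_star A B p - tau A B p).
Proof.
  intros psi.
  pose proof (HApos p Hp) as hAp. pose proof (HBpos p Hp) as hBp.
  pose proof (Q_basis_nonzero x Hx) as hx.
  pose proof (bil_gmet_pos A B p x hAp hBp hx) as hw.
  assert (hv : bil (fun i j => gtmet A B i j p) x x <> 0).
  { intros h0. apply Hpsi. rewrite g_angle_Qv2, h0 by lra. unfold Rdiv.
    rewrite Rmult_0_l. apply acos_0. }
  assert (HA0 : forall q, U q -> A q <> 0) by (intros q hq; specialize (HApos q hq); lra).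
  assert (HB0 : forall q, U q -> B q <> 0) by (intros q hq; specialize (HBpos q hq); lra).
  destruct (rhot_sub_rho U A B HU HA0 HB0 p Hp) as (d & e & hdiff).
  unfold psi. rewrite cos_g_angle_Qv2 by auto.
  apply (ric_dir_t_formula A B p d e); auto; lra.
Qed.
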